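(* Let $L\subseteq\Sigma^\omega$ be a language recognised by some deterministic coBüchi automaton, and let $\mathcal{A}_{\min}$ be a nice, safe minimal and safe centralised history-deterministic coBüchi automaton recognising $L$, with safe components $\mathcal{S}_1,\dots,\mathcal{S}_k$ (state sets $S_i$, transition sets $\Delta_i$). Let $R_1,\dots,R_m$ be the distinct residuals of $L$, with $R_1=L$, and for each $j$ let $Q^{R_j}$ be the set of states $q$ of $\mathcal{A}_{\min}$ whose language (with $q$ as initial state) is $R_j$. Let $n_j=\max_{1\le i\le k}|S_i\cap Q^{R_j}|$, let $P_j=\{p_j^1,\dots,p_j^{n_j}\}$ be pairwise disjoint sets, and $Q=P_1\cup\dots\cup P_m$. Let $\mathcal{A}_{\mathrm{gen}}$ be the generalised coBüchi automaton with states $Q$, initial state $p_1^1$, colours $\{1,\dots,k\}$, and transitions: for every transition $(q,a,q')$ of $\mathcal{A}_{\min}$ with $q\in Q^{R_j}$ and $q'\in Q^{R_{j'}}$, all triples $(p,a,p')$ with $p\in P_j$, $p'\in P_{j'}$. For each $i$, let $\phi_i:S_i\to Q$ be an injective map with $\phi_i(q)\in P_j$ whenever $q\in Q^{R_j}$, extended to transitions by $\phi_i(q,a,q')=(\phi_i(q),a,\phi_i(q'))$, and label each transition $e$ of $\mathcal{A}_{\mathrm{gen}}$ by $\mathrm{col}(e)=\{i : \text{there is no } e'\in\Delta_i \text{ with } \phi_i(e')=e\}$. Then $\mathcal{A}_{\mathrm{gen}}$ is history-deterministic and $\mathcal{L}(\mathcal{A}_{\mathrm{gen}})=L$.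
   Context: An automaton is a tuple $(Q,\Sigma,q_{\mathrm{init}},\Delta,\Gamma,\mathrm{col},W)$ with finite state set, finite input alphabet $\Sigma$, initial state, transitions $\Delta\subseteq Q\times\Sigma\times Q$, output alphabet $\Gamma$, labelling $\mathrm{col}:\Delta\to\Gamma$, acceptance condition $W\subseteq\Gamma^\omega$. A run on $w=a_1a_2\cdots$ is a sequence $(q_0,a_1,q_1)(q_1,a_2,q_2)\cdots$ of transitions with $q_0=q_{\mathrm{init}}$, accepting if its label sequence is in $W$; $\mathcal{L}(\mathcal{A})$ is the set of words with an accepting run. With a finite colour set $C$ and $\Gamma=2^C$, generalised coBüchi means $W=\{x : \text{some } c\in C \text{ occurs in only finitely many letters of } x\}$; a coBüchi automaton is the case $C=\{1\}$, its coBüchi transitions being those labelled $\{1\}$. A resolver is a map $\sigma:\Sigma^+\to\Delta$ such that for every $w=a_0a_1\cdots$, $\sigma(a_0)\sigma(a_0a_1)\cdots$ is a run on $w$, accepting whenever $w\in\mathcal{L}(\mathcal{A})$; history-deterministic means a resolver exists. The residual of $L$ with respect to $u\in\Sigma^*$ is $u^{-1}L=\{w\in\Sigma^\omega : uw\in L\}$. For a coBüchi automaton: $\mathcal{A}_{\mathrm{safe}}$ is obtained by deleting coBüchi transitions; a safe component is a strongly connected component of $\mathcal{A}_{\mathrm{safe}}$; the safe language of $q$ is the set of words with an infinite path from $q$ in $\mathcal{A}_{\mathrm{safe}}$; two states are equivalent if the automaton started from each recognises the same language. Semantically deterministic: $(q,a,p_1),(q,a,p_2)\in\Delta$ implies $p_1,p_2$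 equivalent; normal form: transitions between different safe components are coBüchi transitions; safe deterministic: $\mathcal{A}_{\mathrm{safe}}$ deterministic; nice: all states reachable, semantically deterministic, normal form, safe deterministic. Safe centralised: equivalent states with inclusion-comparable safe languages lie in the same safe component; safe minimal: equivalent states with equal safe languages are equal. *)

From mathcomp Require Import all_boot.
From mathcomp Require Import boolp.
Set Implicit Arguments. Unset Strict Implicit. Unset Printing Implicit Defensive.

Section Automata.
Variable Sigma : finType.

Definition word := nat -> Sigma.
Definition language := word -> Prop.
Definition lang_eq (L1 L2 : language) := forall w, L1 w <-> L2 w.
Definition lang_sub (L1 L2 : language) := forall w, L1 w -> L2 w.

Definition prepend (u : seq Sigma) (w : word) : word :=
  fun n => if n < size u then nth (w 0) u n else w (n - size u).
Definition residual (L : language) (u : seq Sigma) : language :=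
  fun w => L (prepend u w).
Definition is_residual (L R : language) := exists u, lang_eq R (residual L u).
Definition prefix (w : word) (n : nat) : seq Sigma := mkseq w n.

Record gcba (Q C : finType) := GCBA {
  ginit : Q;
  gdelta : Q -> Sigma -> Q -> bool;
  gcol : Q -> Sigma -> Q -> {set C} }.

Section General.
Variables (Q C : finType) (A : gcba Q C).

Definition is_trans (e : Q * Sigma * Q) := gdelta A e.1.1 e.1.2 e.2.
Definition tcol (e : Q * Sigma * Q) := gcol A e.1.1 e.1.2 e.2.

Definition run_from (q : Q) (w : word) (r : nat -> Q * Sigma * Q) :=
  (r 0).1.1 = q /\
  forall n, is_trans (r n) /\ (r n).1.2 = w n /\ (r n.+1).1.1 = (r n).2.

Definition gcb_accepting (x : nat -> {set C}) :=
  exists c : C, exists N, forall n, N <= n -> c \notin x n.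

Definition accepting_run (r : nat -> Q * Sigma * Q) :=
  gcb_accepting (fun n => tcol (r n)).

Definition lang_from (q : Q) : language :=
  fun w => exists r, run_from q w r /\ accepting_run r.
Definition lang : language := lang_from (ginit A).

(** resolver sigma : Sigma^+ -> Delta (value on the empty word is irrelevant) *)
Definition resolver (sigma : seq Sigma -> Q * Sigma * Q) :=
  forall w : word,
    run_from (ginit A) w (fun n => sigma (prefix w n.+1)) /\
    (lang w -> accepting_run (fun n => sigma (prefix w n.+1))).
Definition history_deterministic := exists sigma, resolver sigma.

Definition deterministic :=
  forall q a p1 p2, gdelta A q a p1 -> gdelta A q a p2 -> p1 = p2.
End General.

(** coBuchi automata: colour set C = {1}, represented by unit *)
Section CoBuchi.
Variables (Q : finType) (A : gcba Q unit).

Definition cobuchi_trans q a q' := gdelta A q a q' && (tt \in gcol A q a q').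
Definition safe_trans q a q' := gdelta A q a q' && (tt \notin gcol A q a q').
Definition safe_rel : rel Q := [rel q q' | [exists a, safe_trans q a q']].
Definition same_safe_comp (q p : Q) :=
  connect safe_rel q p && connect safe_rel p q.
Definition safe_comp_of (q : Q) : {set Q} := [set p | same_safe_comp q p].
Definition is_safe_comp (S : {set Q}) := exists q, S = safe_comp_of q.
Definition safe_comp_trans (S : {set Q}) q a q' :=
  [&& safe_trans q a q', q \in S & q' \in S].

Definition safe_lang (q : Q) : language :=
  fun w => exists r, run_from A q w r /\ forall n, tt \notin tcol A (r n).

Definition equiv_states (p q : Q) := lang_eq (lang_from A p) (lang_from A q).

Definition all_reachable :=
  forall q, connect [rel x y | [exists a, gdelta A x a y]] (ginit A) q.
Definition semantically_deterministic :=
  forall q a p1 p2, gdelta A q a p1 -> gdelta A q a p2 -> equiv_states p1 p2.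
Definition normal_form :=
  forall q a q', gdelta A q a q' -> ~~ same_safe_comp q q' -> cobuchi_trans q a q'.
Definition safe_deterministic :=
  forall q a p1 p2, safe_trans q a p1 -> safe_trans q a p2 -> p1 = p2.
Definition nice :=
  [/\ all_reachable, semantically_deterministic, normal_form & safe_deterministic].

Definition safe_centralised :=
  forall p q, equiv_states p q ->
    (lang_sub (safe_lang p) (safe_lang q) \/ lang_sub (safe_lang q) (safe_lang p)) ->
    same_safe_comp p q.
Definition safe_minimal :=
  forall p q, equiv_states p q -> lang_eq (safe_lang p) (safe_lang q) -> p = q.
End CoBuchi.

Section Construction.
Variables (Qm : finType) (Amin : gcba Qm unit).
Variables (m : nat) (R : 'I_m -> language).
Variables (k : nat) (Sc : 'I_k -> {set Qm}).
(** Q is partitioned into the P_j = blk^-1 j; q0 = p_1^1 *)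
Variables (Q : finType) (blk : Q -> 'I_m) (q0 : Q).
Variable phi : 'I_k -> Qm -> Q.

Definition QR (j : 'I_m) : {set Qm} :=
  [set q | `[< lang_eq (lang_from Amin q) (R j) >]].
Definition nR (j : 'I_m) : nat := \max_(i < k) #|Sc i :&: QR j|.

Definition gen_delta (p : Q) (a : Sigma) (p' : Q) : bool :=
  [exists q, exists q', [&& gdelta Amin q a q', q \in QR (blk p) & q' \in QR (blk p')]].
Definition gen_col (p : Q) (a : Sigma) (p' : Q) : {set 'I_k} :=
  [set i | ~~ [exists q, exists q',
     [&& safe_comp_trans Amin (Sc i) q a q', phi i q == p & phi i q' == p']]].
Definition A_gen : gcba Q 'I_k := GCBA q0 gen_delta gen_col.
End Construction.
End Automata.

From Pilot Require Import Defs.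
From mathcomp Require Import all_boot.
From mathcomp Require Import boolp.
From mathcomp Require Import zify.
Set Implicit Arguments. Unset Strict Implicit. Unset Printing Implicit Defensive.

(** Along any run of [A_gen] on [w], the block [P_j] reached after [n] letters
    satisfies [R_j = (w_0 ... w_(n-1))^-1 L], because [A_min] is semantically
    deterministic.  If a colour [i] eventually disappears from an accepting run
    of [A_gen], its tail is the [phi_i]-image of a safe run of [A_min] inside
    [S_i]; that run starts in a state of language [R_j], so the tail of [w] lies
    in the current residual and [w \in L].  Conversely, a resolver of [A_min] is
    transported by [q |-> phi_i q] where [S_i] is the safe component of [q]: an
    accepting run of [A_min] eventually only takes safe transitions, which by
    normal form stay in one component [S_i], and its image then avoids colour
    [i]. *)

Section Words.
Variable Sigma : finType.
Implicit Types (w : word Sigma) (u : seq Sigma) (a : Sigma) (L : language Sigma).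

Lemma prepend_nil w : prepend [::] w = w.
Proof. by apply: funext => n; rewrite /prepend /= subn0. Qed.

Lemma prepend1S a w n : prepend [:: a] w n.+1 = w n.
Proof. by rewrite /prepend /= subSS subn0. Qed.

Lemma prepend_rcons u a w : prepend (rcons u a) w = prepend u (prepend [:: a] w).
Proof.
apply: funext => n; rewrite /prepend /= size_rcons nth_rcons.
case: (ltngtP n (size u)) => [lt_nu|lt_un|->]; last by rewrite ltnSn subnn.
- by rewrite ltnW //; apply: set_nth_default.
- have -> : (n < (size u).+1) = false by lia.
  have -> : (n - size u < 1) = false by lia.
  by congr w; lia.
Qed.

Lemma prepend_prefix w N : prepend (Defs.prefix w N) (fun n => w (N + n)) = w.
Proof.
apply: funext => n; rewrite /prepend size_mkseq.
by case: ltnP => [lt_nN|/subnKC ->]; rewrite ?nth_mkseq.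
Qed.

Lemma residual_nil L : lang_eq (residual L [::]) L.
Proof. by move=> w; rewrite /residual prepend_nil. Qed.

Lemma residual_rcons L u a :
  lang_eq (residual L (rcons u a)) (residual (residual L u) [:: a]).
Proof. by move=> w; rewrite /residual prepend_rcons. Qed.

End Words.

Section Runs.
Variables (Sigma Q C : finType) (A : gcba Sigma Q C).

Lemma accepting_run_shift r N :
  accepting_run A (fun n => r (N + n)) <-> accepting_run A r.
Proof.
split=> -[c [M colM]].
- exists c, (N + M) => n le_n; have -> : n = N + (n - N) by lia.
  by apply: colM; lia.
- by exists c, M => n le_Mn; apply: colM; lia.
Qed.

Lemma resolver_of_lang_sub (L : language Sigma) (sigma : seq Sigma -> Q * Sigma * Q) :
  (forall w, run_from A (ginit A) w (fun n => sigma (Defs.prefix w n.+1)) /\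
             (L w -> accepting_run A (fun n => sigma (Defs.prefix w n.+1)))) ->
  lang_sub (lang A) L ->
  resolver A sigma /\ lang_eq (lang A) L.
Proof.
move=> sigmaP subL; split=> [w|w]; have [run acc] := sigmaP w.
  by split=> // /subL.
by split=> [/subL // | /acc]; exists (fun n => sigma (Defs.prefix w n.+1)).
Qed.

End Runs.

Section CoBuchiAutomata.
Variables (Sigma Q : finType) (A : gcba Sigma Q unit).

Lemma safe_lang_sub_lang_from q : lang_sub (safe_lang A q) (lang_from A q).
Proof. by move=> w [r [run safe]]; exists r; split=> //; exists tt, 0. Qed.

Lemma mem_safe_comp_of q : q \in safe_comp_of A q.
Proof. by rewrite inE /same_safe_comp connect0. Qed.

Lemma safe_comp_of_eq p q :
  same_safe_comp A p q -> safe_comp_of A p = safe_comp_of A q.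
Proof.
move=> /andP [pq qp]; apply/setP => x; rewrite !inE /same_safe_comp.
apply/andP/andP => -[xp px]; split.
- exact: connect_trans qp xp.
- exact: connect_trans px pq.
- exact: connect_trans pq xp.
- exact: connect_trans px qp.
Qed.

Section SemanticallyDeterministic.
Hypothesis sdA : semantically_deterministic A.

Lemma lang_from_trans q a q' :
  gdelta A q a q' -> lang_eq (lang_from A q') (residual (lang_from A q) [:: a]).
Proof.
move=> qaq' w; split=> [[r [[r0 run] acc]] | [r [[r0 run] acc]]].
- pose r' n := if n is n'.+1 then r n' else (q, a, q'); exists r'; split.
    split=> // -[|n] /=; first by rewrite r0.
    by rewrite prepend1S; case: (run n).
  exact: (accepting_run_shift A r' 1).1 acc.
- have [trans0 [letter0 _]] := run 0.
  have qar : gdelta A q a (r 0).2 by move: trans0; rewrite /is_trans r0 letter0.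
  apply/(sdA qar qaq' w); exists (fun n => r n.+1); split.
    split=> [|n]; first by case: (run 0) => _ [_ ->].
    by have [? [? ?]] := run n.+1; rewrite -(prepend1S a w).
  exact: (accepting_run_shift A r 1).2 acc.
Qed.

Lemma lang_from_reachable (L : language Sigma) :
  all_reachable A -> lang_eq (lang A) L ->
  forall q, exists u, lang_eq (lang_from A q) (residual L u).
Proof.
move=> reach langA q; have /connectP [p path_p ->] := reach q.
have : exists u, lang_eq (lang_from A (ginit A)) (residual L u).
  by exists [::]; move=> w; rewrite residual_nil; apply: langA.
elim: p (ginit A) path_p => [|y p IHp] x //= /andP [/existsP [a xay] path_p].
case=> u xu; apply: (IHp y path_p); exists (rcons u a) => w.
by rewrite (lang_from_trans xay w) residual_rcons; apply: xu.
Qed.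

End SemanticallyDeterministic.

Lemma normal_form_safe_trans q a q' :
  normal_form A -> safe_trans A q a q' -> same_safe_comp A q q'.
Proof.
move=> nfA /andP [qaq' safe]; apply: contraTT safe => not_same.
by have /andP [_ ->] := nfA _ _ _ qaq' not_same.
Qed.

Lemma safe_comp_of_run_const q w r N :
  normal_form A -> run_from A q w r ->
  (forall n, N <= n -> tt \notin tcol A (r n)) ->
  forall n, N <= n -> safe_comp_of A (r n).1.1 = safe_comp_of A (r N).1.1.
Proof.
move=> nfA [_ run] safe n /subnKC <-; elim: (n - N) => [|t IHt]; first by rewrite addn0.
have [trans [_ next]] := run (N + t).
rewrite addnS next -IHt; symmetry; apply/safe_comp_of_eq.
apply: (normal_form_safe_trans (a := (r (N + t)).1.2) nfA).
by apply/andP; split; [exact: trans | apply: safe; rewrite leq_addr].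
Qed.

End CoBuchiAutomata.

Section Construction.
Variables (Sigma : finType) (L : language Sigma).
Variables (Qm : finType) (Amin : gcba Sigma Qm unit).
Variables (k m : nat) (Sc : 'I_k -> {set Qm}) (R : 'I_m -> language Sigma).
Variables (Q : finType) (blk : Q -> 'I_m) (q0 : Q) (phi : 'I_k -> Qm -> Q).

Local Notation Agen := (A_gen Amin R Sc blk q0 phi).

Hypothesis sd_Amin : semantically_deterministic Amin.
Hypothesis reach_Amin : all_reachable Amin.
Hypothesis lang_Amin : lang_eq (lang Amin) L.
Hypothesis R_onto : forall u, exists j, lang_eq (residual L u) (R j).
Hypothesis R_init : lang_eq (R (blk q0)) L.
Hypothesis phi_inj : forall i, {in Sc i &, injective (phi i)}.
Hypothesis phi_blk : forall i j q, q \in Sc i -> q \in QR Amin R j -> blk (phi i q) = j.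

Lemma mem_QR q j : q \in QR Amin R j <-> lang_eq (lang_from Amin q) (R j).
Proof. by rewrite inE; split=> /asboolP. Qed.

Lemma exists_QR q : exists j, q \in QR Amin R j.
Proof.
have [u qu] := lang_from_reachable sd_Amin reach_Amin lang_Amin q.
have [j uj] := R_onto u; exists j; apply/mem_QR => w.
by rewrite qu uj.
Qed.

Lemma gen_delta_residual p a p' :
  gen_delta Amin R blk p a p' -> lang_eq (R (blk p')) (residual (R (blk p)) [:: a]).
Proof.
move=> /existsP [q /existsP [q' /and3P [qaq' /mem_QR qp /mem_QR q'p']]] w.
by rewrite -(q'p' w) (lang_from_trans sd_Amin qaq' w) /residual qp.
Qed.

Lemma gen_run_residual w r :
  run_from Agen q0 w r ->
  forall n, lang_eq (R (blk (r n).1.1)) (residual L (Defs.prefix w n)).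
Proof.
move=> [r0 run]; elim=> [|n IHn] x; first by rewrite r0 R_init residual_nil.
have [trans [letter next]] := run n.
rewrite next (gen_delta_residual trans x) /Defs.prefix mkseqS residual_rcons -letter.
exact: IHn.
Qed.

Lemma gen_run_pullback p w r i N :
  run_from Agen p w r -> (forall n, N <= n -> i \notin tcol Agen (r n)) ->
  exists q, [/\ q \in Sc i, phi i q = (r N).1.1 & safe_lang Amin q (fun n => w (N + n))].
Proof.
move=> [_ run] no_i.
have image n : exists e : Qm * Qm, [&& safe_comp_trans Amin (Sc i) e.1 (r (N + n)).1.2 e.2,
    phi i e.1 == (r (N + n)).1.1 & phi i e.2 == (r (N + n)).2].
  have := no_i (N + n) (leq_addr _ _).
  by rewrite /tcol inE negbK => /existsP [q /existsP [q' e]]; exists (q, q').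
pose g n := xchoose (image n); have gP n := xchooseP (image n).
exists (g 0).1; split.
- by have /and3P [/and3P [_ src _] _ _] := gP 0.
- by have /and3P [_ /eqP -> _] := gP 0; rewrite addn0.
exists (fun n => ((g n).1, w (N + n), (g n).2)); split.
  split=> // n; have [_ [letter next]] := run (N + n).
  have /and3P [/and3P [/andP [trans _] _ tgt] _ /eqP phi_tgt] := gP n.
  have /and3P [/and3P [_ src _] /eqP phi_src _] := gP n.+1.
  split; first by rewrite /is_trans /= -letter.
  by split=> //=; apply: (phi_inj src tgt); rewrite phi_src phi_tgt addnS next.
move=> n; have [_ [letter _]] := run (N + n).
by have /and3P [/and3P [/andP [_ safe] _ _] _ _] := gP n; rewrite /tcol /= -letter.
Qed.

Lemma lang_gen_sub : lang_sub (lang Agen) L.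
Proof.
move=> w [r [run [i [N no_i]]]].
have [q [q_Sc phi_q safe_q]] := gen_run_pullback run no_i.
have [j q_j] := exists_QR q.
have tail_j : R j (fun n => w (N + n)).
  by apply/(mem_QR q j).1 => //; apply: safe_lang_sub_lang_from.
rewrite -(prepend_prefix w N); apply/(gen_run_residual run N).
by rewrite -phi_q (phi_blk q_Sc q_j).
Qed.

Hypothesis nf_Amin : normal_form Amin.
Hypothesis Sc_inj : injective Sc.
Hypothesis Sc_onto : forall S, is_safe_comp Amin S -> exists i, Sc i = S.

Definition lift_state (q : Qm) : Q :=
  if [pick i | Sc i == safe_comp_of Amin q] is Some i then phi i q else q0.

(** A run of [A_gen] must start in [q0], which need not be the lift of the
    initial state of [A_min]; both lie in the block of the residual [L]. *)
Definition lift_trans (first : bool) (e : Qm * Sigma * Qm) : Q * Sigma * Q :=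
  ((if first then q0 else lift_state e.1.1, e.1.2), lift_state e.2).

Definition lift_resolver (sigma : seq Sigma -> Qm * Sigma * Qm) (u : seq Sigma) :=
  lift_trans (size u <= 1) (sigma u).

Lemma lift_stateE i q : Sc i = safe_comp_of Amin q -> lift_state q = phi i q.
Proof.
move=> Sc_i; rewrite /lift_state; case: pickP => [i' /eqP Sc_i' | none].
  by rewrite (Sc_inj (etrans Sc_i' (esym Sc_i))).
by move: (none i); rewrite Sc_i eqxx.
Qed.

Lemma lift_state_QR q : q \in QR Amin R (blk (lift_state q)).
Proof.
have [i Sc_i] := Sc_onto (ex_intro _ q erefl).
have [j q_j] := exists_QR q.
by rewrite (lift_stateE Sc_i) (phi_blk _ q_j) // Sc_i mem_safe_comp_of.
Qed.

Lemma lift_run_from w s :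
  run_from Amin (ginit Amin) w s ->
  run_from Agen q0 w (fun n => lift_trans (n == 0) (s n)).
Proof.
move=> [s0 run]; split=> // n; have [trans [letter next]] := run n.
split; last by split=> //=; rewrite next.
apply/existsP; exists (s n).1.1; apply/existsP; exists (s n).2.
rewrite lift_state_QR andbT; apply/andP; split=> //.
case: n {letter next trans} => [|n] /=; last exact: lift_state_QR.
by rewrite s0; apply/mem_QR => x; rewrite R_init; apply: lang_Amin.
Qed.

Lemma lift_run_accepting q w s :
  run_from Amin q w s -> accepting_run Amin s ->
  accepting_run Agen (fun n => lift_trans (n == 0) (s n)).
Proof.
move=> run [[] [N safe]].
have [i Sc_i] := Sc_onto (ex_intro _ (s N).1.1 erefl).
have Sc_n n : N <= n -> Sc i = safe_comp_of Amin (s n).1.1.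
  by move=> le_Nn; rewrite Sc_i (safe_comp_of_run_const nf_Amin run safe le_Nn).
have mem_Sc n : N <= n -> (s n).1.1 \in Sc i.
  by move=> le_Nn; rewrite (Sc_n n) // mem_safe_comp_of.
exists i, N.+1 => n lt_Nn; have [le_Nn le_Nn1] := (ltnW lt_Nn, leqW (ltnW lt_Nn)).
have [trans [_ next]] := run.2 n.
rewrite /tcol inE negbK; apply/existsP; exists (s n).1.1; apply/existsP; exists (s n).2.
rewrite /= (gtn_eqF (leq_ltn_trans (leq0n N) lt_Nn)) -next.
rewrite !(lift_stateE (Sc_n _ _)) // !eqxx !andbT /safe_comp_trans.
rewrite !mem_Sc // !andbT next; apply/andP; split; [exact: trans | exact: safe].
Qed.

Lemma lift_resolverP sigma : resolver Amin sigma ->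
  forall w, run_from Agen q0 w (fun n => lift_resolver sigma (Defs.prefix w n.+1)) /\
    (L w -> accepting_run Agen (fun n => lift_resolver sigma (Defs.prefix w n.+1))).
Proof.
move=> sigmaP w; have [run acc] := sigmaP w.
have -> : (fun n => lift_resolver sigma (Defs.prefix w n.+1))
          = fun n => lift_trans (n == 0) (sigma (Defs.prefix w n.+1)).
  by apply: funext => n; rewrite /lift_resolver size_mkseq ltnS leqn0.
split=> [|/(lang_Amin w).2 /acc]; first exact: lift_run_from.
exact: lift_run_accepting run.
Qed.

End Construction.

Theorem proposition23 (Sigma : finType) (L : language Sigma)
  (Qm : finType) (Amin : gcba Sigma Qm unit)
  (k : nat) (Sc : 'I_k -> {set Qm})
  (m : nat) (R : 'I_m -> language Sigma) (j1 : 'I_m)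
  (Q : finType) (blk : Q -> 'I_m) (q0 : Q)
  (phi : 'I_k -> Qm -> Q) :
  (exists (QD : finType) (D : gcba Sigma QD unit),
      deterministic D /\ lang_eq (lang D) L) ->
  history_deterministic Amin ->
  lang_eq (lang Amin) L ->
  nice Amin -> safe_minimal Amin -> safe_centralised Amin ->
  (* S_1, ..., S_k enumerate the safe components without repetition *)
  injective Sc ->
  (forall i, is_safe_comp Amin (Sc i)) ->
  (forall S, is_safe_comp Amin S -> exists i, Sc i = S) ->
  (* R_1, ..., R_m are the distinct residuals of L, R_{j1} = L *)
  (forall j j', lang_eq (R j) (R j') -> j = j') ->
  (forall j, is_residual L (R j)) ->
  (forall u, exists j, lang_eq (residual L u) (R j)) ->
  lang_eq (R j1) L ->
  (* Q is the disjoint union of the P_j = blk^-1(j), |P_j| = n_j, q0 in P_{j1} *)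
  (forall j, #|[set p | blk p == j]| = nR Amin R Sc j) ->
  blk q0 = j1 ->
  (* the maps phi_i : S_i -> Q *)
  (forall i, {in Sc i &, injective (phi i)}) ->
  (forall i j q, q \in Sc i -> q \in QR Amin R j -> blk (phi i q) = j) ->
  history_deterministic (A_gen Amin R Sc blk q0 phi) /\
  lang_eq (lang (A_gen Amin R Sc blk q0 phi)) L.
Proof.
move=> _ [sigma sigmaP] lang_Amin [reach sd nf _] _ _ Sc_inj _ Sc_onto _ _ R_onto
  R_j1 _ blk_q0 phi_inj phi_blk.
have R_init : lang_eq (R (blk q0)) L by rewrite blk_q0.
have [resolver_lift lang_gen] := resolver_of_lang_sub
  (lift_resolverP sd reach lang_Amin R_onto R_init phi_blk nf Sc_inj Sc_onto sigmaP)
  (lang_gen_sub sd reach lang_Amin R_onto R_init phi_inj phi_blk).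
by split; first exists (lift_resolver Amin Sc q0 phi sigma).
Qed.
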